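(* A (finite) maximal triangle-free graph on at least two vertices contains no induced cycle of length six if and only if it is a blow-up of some Andrásfai graph $\Gamma_k$, $k\ge1$.
   Context: A graph is maximal triangle-free if it contains no triangle but adding any new edge creates a triangle. A blow-up of $H$ is any graph obtained by replacing each vertex of $H$ by a non-empty independent set and each edge of $H$ by the complete bipartite graph between the corresponding sets, with no further edges. Andrásfai graph $\Gamma_k$: vertex set $\mathbb Z/(3k-1)\mathbb Z$, $ij$ an edge iff $i-j\in\{k,\dots,2k-1\}$ mod $3k-1$. *)

From mathcomp Require Import all_boot.
Set Implicit Arguments. Unset Strict Implicit. Unset Printing Implicit Defensive.

Section Graphs.
Variable T : finType.
Variable e : rel T.

Definition simple_graph : Prop := symmetric e /\ irreflexive e.

Definition triangle_free : Prop :=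
  forall x y z : T, ~~ [&& e x y, e y z & e x z].

(* triangle-free, and adding any new edge (between distinct non-adjacent
   vertices) creates a triangle, i.e. they have a common neighbour *)
Definition maximal_triangle_free : Prop :=
  triangle_free /\
  forall x y : T, x != y -> ~~ e x y -> exists z : T, e x z && e z y.

Definition c6_adj (i j : 'I_6) : bool :=
  (j == (i.+1 %% 6) :> nat) || (i == (j.+1 %% 6) :> nat).

Definition has_induced_C6 : Prop :=
  exists v : 'I_6 -> T, injective v /\
    forall i j : 'I_6, e (v i) (v j) = c6_adj i j.

(* blow-up of a graph H (vertex type U, adjacency eH): each vertex of H is
   replaced by the nonempty independent set f^-1(u) (surjectivity), and
   adjacency is exactly induced by eH *)
Definition is_blowup_of (U : finType) (eH : rel U) : Prop :=
  exists f : T -> U, (forall u : U, exists x : T, f x = u) /\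
    forall x y : T, e x y = eH (f x) (f y).
End Graphs.

Definition andrasfai_adj (k : nat) (i j : 'I_(3 * k - 1)) : bool :=
  let n := 3 * k - 1 in
  let d := (i + n - j) %% n in
  (k <= d) && (d <= 2 * k - 1).

From mathcomp Require Import all_boot zify.
Set Implicit Arguments. Unset Strict Implicit. Unset Printing Implicit Defensive.

(* An induced C6 of a blow-up of H maps to an induced C6 of H, since distinct
   vertices of C6 have distinct neighbourhoods and hence never lie in a common
   blown-up class; and Gamma_k has no induced C6 because, on the representatives
   0..3k-2, every neighbourhood is an interval of length k.

   Conversely fix a vertex v and call the trace of a non-neighbour x of v the set
   of common neighbours of x and v.  In the absence of an induced C6, two
   non-neighbours are adjacent exactly when their traces are disjoint.  Let the
   core be a trace of minimal size.  The traces meeting the core contain it and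
   form a chain, while the traces avoiding the core pairwise meet.  Numbering the
   chain by height, each neighbour of v by the number of chain members missing it,
   and each core-avoiding trace by the number of chain members disjoint from it
   turns membership and disjointness into inequalities between these numbers,
   which yields a blow-up of Gamma_k, where k - 1 counts the traces meeting the
   core other than N(v) itself. *)

Lemma bounded_inj_onto (A : finType) (C : {set A}) (h : A -> nat) :
  {in C &, injective h} -> {in C, forall X, h X < #|C|} ->
  forall i, i < #|C| -> exists2 X, X \in C & h X = i.
Proof.
move=> h_inj h_lt i i_lt.
suff /exists_inP[X XC /eqP hX] : [exists X in C, h X == i] by exists X.
apply: contraT => /exists_inPn no_i.
have uniq_h : uniq [seq h X | X <- enum C].
  by rewrite map_inj_in_uniq ?enum_uniq // => X Y; rewrite !mem_enum; apply: h_inj.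
have sub : {subset [seq h X | X <- enum C] <= rem i (iota 0 #|C|)}.
  move=> m /mapP[X]; rewrite mem_enum => XC ->.
  rewrite (mem_rem_uniq _ (iota_uniq 0 #|C|)) inE mem_iota h_lt // andbT.
  by rewrite no_i.
have := uniq_leq_size uniq_h sub.
by rewrite size_map -cardE size_rem ?mem_iota ?size_iota //; lia.
Qed.

Definition andrasfai_nat (k a b : nat) : bool :=
  ((b + k <= a) && (a <= b + 2 * k - 1)) || ((a + k <= b) && (b <= a + 2 * k - 1)).

Lemma andrasfai_natC k : symmetric (andrasfai_nat k).
Proof. by move=> a b; rewrite /andrasfai_nat orbC. Qed.

Lemma andrasfai_adjE k (i j : 'I_(3 * k - 1)) :
  andrasfai_adj i j = andrasfai_nat k i j.
Proof.
rewrite /andrasfai_adj /andrasfai_nat.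
have := ltn_ord i; have := ltn_ord j.
case: (leqP j i) => ji i_lt j_lt.
  have -> : i + (3 * k - 1) - j = (i - j) + (3 * k - 1) by lia.
  by rewrite modnDr modn_small; lia.
by rewrite modn_small; lia.
Qed.

Section AndrasfaiHexagon.
Variable k : nat.
Local Notation adj := (andrasfai_nat k).

Lemma andrasfai_nat_short_span p q r w : p <= q <= r -> r < p + k ->
  w < 3 * k - 1 -> adj w p -> adj w r -> adj w q.
Proof. rewrite /andrasfai_nat; lia. Qed.

Lemma andrasfai_nat_right_span p q r w : p + 2 * k <= q <= r -> r < q + k ->
  r < 3 * k - 1 -> w < 3 * k - 1 -> adj w p -> adj w q -> adj w r.
Proof. rewrite /andrasfai_nat; lia. Qed.

Lemma andrasfai_nat_left_span p q r w : p <= q < p + k -> q + 2 * k <= r ->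
  r < 3 * k - 1 -> w < 3 * k - 1 -> adj w q -> adj w r -> adj w p.
Proof. rewrite /andrasfai_nat; lia. Qed.

Lemma andrasfai_nat_sorted_hexagon p q r u v w : p <= q -> q <= r ->
  r < 3 * k - 1 -> u < 3 * k - 1 -> v < 3 * k - 1 -> w < 3 * k - 1 ->
  ~~ adj p q -> ~~ adj q r -> ~~ adj p r ->
  adj u p -> adj u q -> ~~ adj u r ->
  adj v q -> adj v r -> ~~ adj v p ->
  adj w p -> adj w r -> ~~ adj w q -> False.
Proof.
move=> pq qr r_lt u_lt v_lt w_lt pq' qr' pr' up uq ur vq vr vp wp wr wq.
have [rp|pr] := ltnP r (p + k).
  by move: wq; rewrite (@andrasfai_nat_short_span p q r w) ?pq.
have [pkq|qp] := leqP (p + 2 * k) q.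
  have rq : r < q + k by move: qr' qr pkq r_lt; clear; rewrite /andrasfai_nat; lia.
  by move: ur; rewrite (@andrasfai_nat_right_span p q r u) ?pkq.
have [qkr|rq] := leqP (q + 2 * k) r.
  have qp' : q < p + k by move: pq' pq r_lt qkr; clear; rewrite /andrasfai_nat; lia.
  by move: vp; rewrite (@andrasfai_nat_left_span p q r v) ?pq ?qp'.
by move: pq' qr' pr' pr qp rq; clear; rewrite /andrasfai_nat; lia.
Qed.

Lemma andrasfai_nat_hexagon a b c u v w :
  a < 3 * k - 1 -> b < 3 * k - 1 -> c < 3 * k - 1 ->
  u < 3 * k - 1 -> v < 3 * k - 1 -> w < 3 * k - 1 ->
  ~~ adj a b -> ~~ adj b c -> ~~ adj a c ->
  adj u a -> adj u b -> ~~ adj u c ->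
  adj v b -> adj v c -> ~~ adj v a ->
  adj w a -> adj w c -> ~~ adj w b -> False.
Proof.
move=> a_lt b_lt c_lt u_lt v_lt w_lt.
case: (leqP a b) => ab; case: (leqP b c) => bc; case: (leqP a c) => ac;
  [| by exfalso; lia | | | | | by exfalso; lia |]; move=> *.
- exact: (@andrasfai_nat_sorted_hexagon a b c u v w).
- apply: (@andrasfai_nat_sorted_hexagon a c b w v u);
    by [ | exact: ltnW | rewrite andrasfai_natC].
- apply: (@andrasfai_nat_sorted_hexagon c a b w u v);
    by [ | exact: ltnW | rewrite andrasfai_natC].
- apply: (@andrasfai_nat_sorted_hexagon b a c u w v);
    by [ | exact: ltnW | rewrite andrasfai_natC].
- apply: (@andrasfai_nat_sorted_hexagon b c a v w u);
    by [ | exact: ltnW | rewrite andrasfai_natC].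
- apply: (@andrasfai_nat_sorted_hexagon c b a v u w);
    by [ | exact: ltnW | rewrite andrasfai_natC].
Qed.

End AndrasfaiHexagon.

Lemma c6_adjC : symmetric c6_adj.
Proof. by move=> i j; rewrite /c6_adj orbC. Qed.

Lemma c6_adj_twin_free (i j : 'I_6) : c6_adj i =1 c6_adj j -> i = j.
Proof.
move=> twin; apply/eqP; apply: contraT => neq_ij.
have [l] : exists l, c6_adj i l != c6_adj j l.
  case: i j {twin} neq_ij => [[|[|[|[|[|[|i]]]]]] ?] [[|[|[|[|[|[|j]]]]]] ?] // _;
  first [ by exists (@Ordinal 6 0 isT) | by exists (@Ordinal 6 1 isT)
        | by exists (@Ordinal 6 2 isT) | by exists (@Ordinal 6 3 isT) ].
by rewrite twin eqxx.
Qed.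

Lemma blowup_induced_C6 (T U : finType) (e : rel T) (eH : rel U) :
  is_blowup_of e eH -> has_induced_C6 e -> has_induced_C6 eH.
Proof.
move=> [f [_ ef]] [w [_ ew]]; exists (f \o w); split=> [i j /= fij | i j /=].
  by apply: c6_adj_twin_free => l; rewrite -!ew !ef fij.
by rewrite -ef ew.
Qed.

Lemma andrasfai_C6_free k : ~ has_induced_C6 (@andrasfai_adj k).
Proof.
move=> [w [_ ew]].
have adj i j : andrasfai_nat k (w i) (w j) = c6_adj i j by rewrite -andrasfai_adjE ew.
apply: (@andrasfai_nat_hexagon k (w (@Ordinal 6 0 isT)) (w (@Ordinal 6 2 isT))
  (w (@Ordinal 6 4 isT)) (w (@Ordinal 6 1 isT)) (w (@Ordinal 6 3 isT))
  (w (@Ordinal 6 5 isT))); by rewrite ?adj.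
Qed.

Section TriangleFree.
Variables (T : finType) (e : rel T).
Hypotheses (e_sym : symmetric e) (e_irr : irreflexive e) (e_tf : triangle_free e).

Lemma triangle_freeP x y z : e x y -> e y z -> e x z -> False.
Proof. by move=> xy yz xz; move: (e_tf x y z); rewrite xy yz xz. Qed.

(* The hexagon a x b y c z: the missing chords x y, y z and x z come for free. *)
Lemma induced_C6_of_hexagon a x b y c z :
  ~~ e a b -> ~~ e b c -> ~~ e a c -> ~~ e a y -> ~~ e x c -> ~~ e b z ->
  e a x -> e x b -> e b y -> e y c -> e c z -> e a z -> has_induced_C6 e.
Proof.
move=> ab bc ac ay xc bz ax xb yb yc cz az.
have xy : ~~ e x y by apply/negP => xy; exact: (triangle_freeP xb yb).
have yz : ~~ e y z by apply/negP => yz; exact: (triangle_freeP yc cz).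
have xz : ~~ e x z by apply/negP => xz; exact: (triangle_freeP ax xz).
move: ab bc ac ay xc bz xy yz xz => /negbTE ab /negbTE bc /negbTE ac /negbTE ay
  /negbTE xc /negbTE bz /negbTE xy /negbTE yz /negbTE xz.
pose w (i : 'I_6) := nth a [:: a; x; b; y; c; z] i.
have ew i j : e (w i) (w j) = c6_adj i j.
  wlog le_ij : i j / i <= j.
    by move=> sym; case: (leqP i j) => [/sym // | /ltnW/sym]; rewrite e_sym c6_adjC.
  case: i j le_ij => [[|[|[|[|[|[|i]]]]]] ?] [[|[|[|[|[|[|j]]]]]] ?] //= _;
  by rewrite ?e_irr ?(ab, bc, ac, ay, xc, bz, xy, yz, xz, ax, xb, yb, yc, cz, az).
exists w; split=> // i j wij.
by apply: c6_adj_twin_free => l; rewrite -!ew wij.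
Qed.

Section C6Free.
Hypothesis e_max : forall x y : T, x != y -> ~~ e x y -> exists z, e x z && e z y.
Hypothesis C6_free : ~ has_induced_C6 e.

Section Vertex.
Variable v : T.
Hypothesis v_nonisolated : exists s, e v s.

Definition nbhd := [set s | e v s].
Definition conbhd := [set x | ~~ e v x].
Definition trace x := [set s | e v s && e x s].

Lemma conbhdE x : (x \in conbhd) = (x \notin nbhd).
Proof. by rewrite !inE. Qed.

Lemma trace_sub_nbhd x : trace x \subset nbhd.
Proof. by apply/subsetP => s; rewrite !inE => /andP[]. Qed.

Lemma nbhd_indep s t : s \in nbhd -> t \in nbhd -> ~~ e s t.
Proof. by rewrite !inE => vs vt; apply/negP => st; apply: (triangle_freeP vs st vt). Qed.

Lemma trace_v : trace v = nbhd.
Proof. by apply/setP => s; rewrite !inE andbb. Qed.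

Lemma trace_neq0 x : x \in conbhd -> exists s, s \in trace x.
Proof.
rewrite inE => vx; have [<- | neq_vx] := eqVneq v x.
  by have [s vs] := v_nonisolated; exists s; rewrite trace_v inE.
by have [s /andP[vs sx]] := e_max neq_vx vx; exists s; rewrite inE vs e_sym.
Qed.

Lemma adj_conbhdE x y : x \in conbhd -> y \in conbhd ->
  e x y = [disjoint trace x & trace y].
Proof.
move=> xM yM; apply/idP/idP => [xy | dis].
  apply/pred0P => s /=; apply/negbTE/negP; rewrite !inE => /andP[/andP[_ xs] /andP[_ ys]].
  exact: (triangle_freeP xy ys xs).
apply/negPn/negP => nxy.
have [s sx] := trace_neq0 xM; have [t ty] := trace_neq0 yM.
have sy := disjointFr dis sx; have tx := disjointFl dis ty.
have neq_xy : x != y by apply: contraTneq sx => ->; rewrite sy.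
have [z /andP[xz zy]] := e_max neq_xy nxy.
have vz : ~~ e v z.
  apply/negP => vz; move/pred0P: dis => /(_ z) /=.
  by rewrite !inE vz xz -(e_sym z) zy.
move: xM yM sx ty; rewrite !inE => vx vy /andP[vs xs] /andP[vt yt].
move: sy tx; rewrite !inE vs vt /= => /negbT ys /negbT xt.
apply: C6_free; apply: (@induced_C6_of_hexagon v s x z y t) => //; by rewrite e_sym.
Qed.

Lemma trace_escape x s : x \in conbhd -> s \in nbhd -> s \notin trace x ->
  exists2 y, y \in conbhd & (s \in trace y) && [disjoint trace y & trace x].
Proof.
rewrite !inE => vx vs; rewrite vs /= => xs.
have neq_sx : s != x by apply: contraNneq vx => <-.
have sx : ~~ e s x by rewrite e_sym.
have [z /andP[sz zx]] := e_max neq_sx sx.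
have vz : ~~ e v z by apply/negP => vz; apply: (triangle_freeP vs sz vz).
exists z; first by rewrite inE.
by rewrite -adj_conbhdE ?inE // zx andbT vs e_sym.
Qed.

Lemma no_three_disjoint_traces x y z : x \in conbhd -> y \in conbhd -> z \in conbhd ->
  [disjoint trace x & trace y] -> [disjoint trace y & trace z] ->
  [disjoint trace x & trace z] -> False.
Proof. by move=> xM yM zM; rewrite -!adj_conbhdE //; apply: triangle_freeP. Qed.

Lemma crossing_traces_cover x y : x \in conbhd -> y \in conbhd ->
  ~~ [disjoint trace x & trace y] ->
  ~~ (trace x \subset trace y) -> ~~ (trace y \subset trace x) ->
  nbhd \subset trace x :|: trace y.
Proof.
move=> xM yM meet_xy /subsetPn[a ax ay] /subsetPn[b yb bx].
have [t /andP[tx ty]] := pred0Pn meet_xy.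
have nxy : ~~ e x y by rewrite adj_conbhdE.
have avoid_both w : w \in conbhd -> [disjoint trace w & trace x] ->
    [disjoint trace w & trace y] -> False.
  move=> wM dis_wx dis_wy.
  have xw : e x w by rewrite adj_conbhdE // disjoint_sym.
  have wy : e w y by rewrite adj_conbhdE.
  move: xM yM wM ax ay yb bx; rewrite !inE => vx vy vw /andP[va xa] ya /andP[vb yb] xb.
  move: ya xb; rewrite va vb /= => ya xb.
  apply: C6_free; apply: (@induced_C6_of_hexagon v a x w y b) => //; by rewrite e_sym.
apply/subsetP => s sS; rewrite inE; apply/negPn/negP; rewrite negb_or => /andP[sx sy].
have [w1 w1M /andP[sw1 dis_w1x]] := trace_escape xM sS sx.
have [w2 w2M /andP[sw2 dis_w2y]] := trace_escape yM sS sy.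
have meet_w1y : ~~ [disjoint trace w1 & trace y].
  by apply/negP; apply: (avoid_both _ w1M dis_w1x).
have meet_w2x : ~~ [disjoint trace x & trace w2].
  by rewrite disjoint_sym; apply/negP => dis_w2x; apply: (avoid_both _ w2M dis_w2x).
have st : ~~ e s t by apply: nbhd_indep => //; apply: (subsetP (trace_sub_nbhd x)).
move: sS sx sy sw1 sw2 tx ty; rewrite !inE => vs; rewrite vs /=.
move=> xs ys w1s w2s /andP[_ xt] /andP[_ yt].
apply: C6_free; apply: (@induced_C6_of_hexagon s w1 x t y w2) => //;
  first [ by rewrite e_sym | by rewrite adj_conbhdE
        | by rewrite adj_conbhdE // disjoint_sym ].
Qed.

Section Core.
Variable x0 : T.
Hypothesis x0M : x0 \in conbhd.
Hypothesis x0_min : forall x, x \in conbhd -> #|trace x0| <= #|trace x|.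

Definition core := trace x0.
Definition meets_core x := (x \in conbhd) && ~~ [disjoint trace x & core].

Lemma core_neq0 : exists t, t \in core.
Proof. exact: trace_neq0. Qed.

Lemma core_sub_nbhd : core \subset nbhd.
Proof. exact: trace_sub_nbhd. Qed.

Lemma trace_not_proper_core x : x \in conbhd -> ~~ (trace x \proper core).
Proof. by move=> xM; apply/negP => /proper_card; rewrite ltnNge x0_min. Qed.

Lemma core_sub_trace x : meets_core x -> core \subset trace x.
Proof.
case/andP => xM meet_x; apply: contraT => not_sub.
have [sub | not_sub'] := boolP (trace x \subset core).
  by move: (trace_not_proper_core xM); rewrite properE sub not_sub.
have meet_x' : ~~ [disjoint core & trace x] by rewrite disjoint_sym.
have cover := crossing_traces_cover x0M xM meet_x' not_sub not_sub'.
have [a a_core ax] := subsetPn not_sub.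
have aS : a \in nbhd by apply: (subsetP core_sub_nbhd).
have [y yM /andP[ay dis_yx]] := trace_escape xM aS ax.
have sub_y : trace y \subset core.
  apply/subsetP => s sy; move/subsetP/(_ s (subsetP (trace_sub_nbhd y) s sy)): cover.
  by rewrite inE (disjointFr dis_yx sy) orbF.
have [t /andP[tx t_core]] := pred0Pn meet_x.
move: (trace_not_proper_core yM); rewrite properE sub_y negbK.
by move/subsetP/(_ t t_core); rewrite (disjointFl dis_yx tx).
Qed.

Lemma meets_core_total x y : meets_core x -> meets_core y ->
  (trace x \subset trace y) || (trace y \subset trace x).
Proof.
move=> Bx By; apply: contraT; rewrite negb_or => /andP[not_xy not_yx].
have core_x := core_sub_trace Bx; have core_y := core_sub_trace By.
case/andP: Bx => xM _; case/andP: By => yM _.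
have [t t_core] := core_neq0.
have meet_xy : ~~ [disjoint trace x & trace y].
  by apply/pred0Pn; exists t; rewrite /= (subsetP core_x) ?(subsetP core_y).
have /subsetP cover := crossing_traces_cover xM yM meet_xy not_xy not_yx.
have [a ax ay] := subsetPn not_xy; have [b bx ay'] := subsetPn not_yx.
have [w1 w1M /andP[_ dis_w1y]] := trace_escape yM (subsetP (trace_sub_nbhd x) a ax) ay.
have [w2 w2M /andP[_ dis_w2x]] := trace_escape xM (subsetP (trace_sub_nbhd y) b bx) ay'.
exfalso; apply: (no_three_disjoint_traces w1M w2M x0M).
- apply/pred0P => s /=; apply/negbTE/negP => /andP[s_w1 s_w2].
  have := cover s (subsetP (trace_sub_nbhd w1) s s_w1).
  by rewrite inE (disjointFr dis_w1y s_w1) (disjointFr dis_w2x s_w2).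
- exact: disjointWr core_x dis_w2x.
- exact: disjointWr core_y dis_w1y.
Qed.

Lemma avoid_core_meet x y : x \in conbhd -> y \in conbhd ->
  [disjoint trace x & core] -> [disjoint trace y & core] ->
  ~~ [disjoint trace x & trace y].
Proof.
by move=> xM yM dis_x dis_y; apply/negP => dis_xy; apply: (no_three_disjoint_traces xM yM x0M).
Qed.

Definition chain :=
  [set trace x | x in [set x | meets_core x && (trace x \proper nbhd)]].

Lemma chainP X : X \in chain ->
  exists x, [/\ meets_core x, trace x \proper nbhd & X = trace x].
Proof. by case/imsetP => x; rewrite inE => /andP[Bx proper_x] ->; exists x. Qed.

Lemma mem_chain x : meets_core x -> trace x \proper nbhd -> trace x \in chain.
Proof. by move=> Bx proper_x; apply: imset_f; rewrite inE Bx. Qed.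

Lemma chain_total X Y : X \in chain -> Y \in chain -> (X \subset Y) || (Y \subset X).
Proof. by case/chainP => x [Bx _ ->] /chainP[y [By _ ->]]; apply: meets_core_total. Qed.

Lemma core_sub_chain X : X \in chain -> core \subset X.
Proof. by case/chainP => x [Bx _ ->]; apply: core_sub_trace. Qed.

Lemma chain_proper X : X \in chain -> X \proper nbhd.
Proof. by case/chainP => x [_ ? ->]. Qed.

Definition level (s : T) := #|[set X in chain | s \notin X]|.
Definition height (X : {set T}) := #|[set Y in chain | Y \proper X]|.
Definition reach (y : T) := #|[set X in chain | [disjoint X & trace y]]|.

Lemma level_le s : level s <= #|chain|.
Proof. by apply: subset_leq_card; apply/subsetP => X; rewrite inE => /andP[]. Qed.

Lemma reach_le y : reach y <= #|chain|.
Proof. by apply: subset_leq_card; apply/subsetP => X; rewrite inE => /andP[]. Qed.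

Lemma height_lt X : X \in chain -> height X < #|chain|.
Proof.
move=> XC; apply: proper_card; apply/properP; split.
  by apply/subsetP => Y; rewrite inE => /andP[].
by exists X; rewrite // inE properxx andbF.
Qed.

Lemma height_proper X Y : X \in chain -> Y \in chain -> X \proper Y -> height X < height Y.
Proof.
move=> XC YC XY; apply: proper_card; apply/properP; split.
  by apply/subsetP => Z; rewrite !inE => /andP[-> /proper_trans->].
by exists X; rewrite !inE ?XC ?YC // properxx.
Qed.

Lemma height_inj : {in chain &, injective height}.
Proof.
move=> X Y XC YC hXY; apply/eqP; apply: contraT => neq_XY.
case/orP: (chain_total XC YC) => sub.
  by move: (height_proper XC YC); rewrite properEneq neq_XY sub hXY ltnn => /(_ isT).
by move: (height_proper YC XC); rewrite properEneq eq_sym neq_XY sub hXY ltnn => /(_ isT).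
Qed.

Lemma mem_chain_level X s : X \in chain -> (s \in X) = (level s <= height X).
Proof.
move=> XC; apply/idP/idP => [sX | ].
  apply: subset_leq_card; apply/subsetP => Y; rewrite !inE => /andP[YC sY].
  rewrite YC properEneq; case/orP: (chain_total XC YC) => [/subsetP XY | ->].
    by rewrite XY in sY.
  by rewrite andbT; apply: contraNneq sY => ->.
apply: contraTT; rewrite -ltnNge => sX; apply: proper_card; apply/properP; split.
  apply/subsetP => Y; rewrite !inE => /andP[YC /properP[/subsetP YX _]].
  by rewrite YC; apply: contra sX; apply: YX.
by exists X; rewrite !inE ?XC // properxx.
Qed.

Lemma mem_trace_level y s : y \in conbhd -> [disjoint trace y & core] ->
  s \in nbhd -> (s \in trace y) = (reach y <= level s).
Proof.
move=> yM dis_y sS; apply/idP/idP => [sy | ].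
  apply: subset_leq_card; apply/subsetP => X; rewrite !inE => /andP[XC dis_X].
  by rewrite XC (disjointFl dis_X sy).
apply: contraTT; rewrite -ltnNge => sy.
have [w wM /andP[sw dis_wy]] := trace_escape yM sS sy.
have Bw : meets_core w.
  by rewrite /meets_core wM; apply: contraL dis_wy => dis_w; apply: avoid_core_meet.
have proper_w : trace w \proper nbhd.
  rewrite properEneq trace_sub_nbhd andbT; have [t ty] := trace_neq0 yM.
  apply/eqP => eq_w; move: (disjointFl dis_wy ty); rewrite eq_w.
  by rewrite (subsetP (trace_sub_nbhd y)).
have WC := mem_chain Bw proper_w.
apply: proper_card; apply/properP; split.
  apply/subsetP => X; rewrite !inE => /andP[XC sX]; rewrite XC.
  case/orP: (chain_total XC WC) => sub; first exact: disjointWl sub dis_wy.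
  by rewrite (subsetP sub) in sX.
by exists (trace w); rewrite in_set WC ?sw.
Qed.

Lemma disjoint_chain_trace X y : X \in chain -> y \in conbhd ->
  [disjoint trace y & core] -> [disjoint X & trace y] = (height X < reach y).
Proof.
move=> XC yM dis_y; apply/idP/idP => [dis_X | ].
  apply: proper_card; apply/properP; split.
    apply/subsetP => Y; rewrite !inE => /andP[YC /properP[YX _]].
    by rewrite YC (disjointWl YX dis_X).
  by exists X; rewrite !inE ?XC // properxx.
apply: contraTT => /pred0Pn[s /andP[sX sy]]; rewrite -leqNgt.
have sS : s \in nbhd by apply: (subsetP (trace_sub_nbhd y)).
by apply: (@leq_trans (level s)); rewrite -?mem_trace_level -?mem_chain_level.
Qed.

Lemma level_core : exists2 s, s \in nbhd & level s = 0.
Proof.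
have [t t_core] := core_neq0; exists t; first exact: (subsetP core_sub_nbhd).
apply/eqP; rewrite cards_eq0; apply/eqP/setP => X; rewrite !inE.
by case XC: (X \in chain); rewrite //= (subsetP (core_sub_chain XC)).
Qed.

Lemma level_succ X : X \in chain ->
  exists2 s, s \in nbhd & (s \notin X) && (level s == (height X).+1).
Proof.
move=> XC; have [_ [s0 s0S s0X]] := properP (chain_proper XC).
have s0D : s0 \in [set s in nbhd | s \notin X] by rewrite inE s0S.
case: (arg_minnP level s0D) => s sD s_min.
have /[1!inE] /andP[sS sX] : s \in [set s in nbhd | s \notin X] := sD.
exists s => //; rewrite sX eqn_leq ltnNge -mem_chain_level // sX andbT.
rewrite leqNgt; apply/negP => level_gt.
have [Y YC /andP[sY not_YX]] :
    exists2 Y, Y \in chain & (s \notin Y) && ~~ (Y \subset X).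
  apply/exists_inP; apply: contraLR level_gt => /exists_inPn noY.
  have -> : (height X).+1 = #|X |: [set Y in chain | Y \proper X]|.
    by rewrite cardsU1 inE properxx andbF.
  rewrite -leqNgt.
  apply: subset_leq_card; apply/subsetP => Y; rewrite !inE => /andP[YC sY].
  move: (noY Y YC); rewrite sY negbK /= properEneq => ->.
  by rewrite YC andbT orbC; case: eqP.
have XY : X \subset Y by case/orP: (chain_total XC YC) => // YX; rewrite YX in not_YX.
have [s2 s2Y s2X] := subsetPn not_YX.
have s2S : s2 \in nbhd by apply: (subsetP (proper_sub (chain_proper YC))).
have s2D : s2 \in [set s in nbhd | s \notin X] by rewrite inE s2S.
move: (s_min s2 s2D); rewrite leqNgt => /negP; apply.
apply: proper_card; apply/properP; split.
  apply/subsetP => Z; rewrite !inE => /andP[ZC s2Z]; rewrite ZC.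
  case/orP: (chain_total ZC YC) => sub; last by rewrite (subsetP sub) in s2Z.
  by apply: contra sY; apply: (subsetP sub).
by exists Y; rewrite !inE YC ?sY ?s2Y.
Qed.

Local Notation k := #|chain|.+1.

(* Non-neighbours of v whose trace avoids the core go to [1, k-1], neighbours of v
   to [k, 2k-1], chain traces to [2k, 3k-2], and the remaining vertices (v among
   them, whose trace is all of nbhd) to 0. *)
Definition label x :=
  if e v x then k + level x
  else if [disjoint trace x & core] then reach x
  else if trace x \proper nbhd then 2 * k + height (trace x)
  else 0.

Lemma label_nbhd s : s \in nbhd -> label s = k + level s.
Proof. by rewrite inE /label => ->. Qed.

Lemma label_avoid x : x \in conbhd -> [disjoint trace x & core] -> label x = reach x.
Proof. by rewrite inE /label => /negbTE -> ->. Qed.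

Lemma label_chain x : meets_core x -> trace x \proper nbhd ->
  label x = 2 * k + height (trace x).
Proof. by case/andP; rewrite inE /label => /negbTE -> /negbTE -> ->. Qed.

Lemma label_conbhd x : x \in conbhd ->
  [\/ [disjoint trace x & core] /\ label x = reach x,
      trace x = nbhd /\ label x = 0
    | trace x \in chain /\ label x = 2 * k + height (trace x)].
Proof.
move=> xM; rewrite /label; move: (xM); rewrite inE => /negbTE ->.
have [dis_x | meet_x] := boolP [disjoint _ & _]; first by constructor 1.
have [proper_x | not_proper] := boolP (trace x \proper nbhd).
  by constructor 3; split=> //; apply: mem_chain; rewrite // /meets_core xM.
by constructor 2; split=> //; apply/eqP; rewrite eqEproper trace_sub_nbhd.
Qed.

Lemma nbhd_meets_trace x : x \in conbhd -> [disjoint nbhd & trace x] = false.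
Proof.
move=> xM; have [t tx] := trace_neq0 xM; apply/negbTE/pred0Pn.
by exists t; rewrite /= tx (subsetP (trace_sub_nbhd x)).
Qed.

Lemma adj_conbhd_label x y : x \in conbhd -> y \in conbhd ->
  e x y = andrasfai_nat k (label x) (label y).
Proof.
move=> xM yM; rewrite adj_conbhdE // /andrasfai_nat.
have := reach_le x; have := reach_le y.
case: (label_conbhd xM) => [[dis_x ->] | [tr_x ->] | [Cx ->]];
case: (label_conbhd yM) => [[dis_y ->] | [tr_y ->] | [Cy ->]].
- by rewrite (negbTE (avoid_core_meet xM yM dis_x dis_y)); lia.
- by rewrite tr_y disjoint_sym nbhd_meets_trace; lia.
- by rewrite disjoint_sym (disjoint_chain_trace Cy xM dis_x); have := height_lt Cy; lia.
- by rewrite tr_x nbhd_meets_trace; lia.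
- by rewrite tr_x nbhd_meets_trace.
- by rewrite tr_x nbhd_meets_trace; have := height_lt Cy; lia.
- by rewrite (disjoint_chain_trace Cx yM dis_y); have := height_lt Cx; lia.
- by rewrite tr_y disjoint_sym nbhd_meets_trace; have := height_lt Cx; lia.
- have [t t_core] := core_neq0.
  have -> : [disjoint trace x & trace y] = false.
    apply/negbTE/pred0Pn; exists t.
    by rewrite /= (subsetP (core_sub_chain Cx)) ?(subsetP (core_sub_chain Cy)).
  by have := height_lt Cx; have := height_lt Cy; lia.
Qed.

Lemma adj_nbhd_label s y : s \in nbhd -> y \in conbhd ->
  e s y = andrasfai_nat k (label s) (label y).
Proof.
move=> sS yM; have -> : e s y = (s \in trace y) by move: (sS); rewrite !inE e_sym => ->.
rewrite label_nbhd // /andrasfai_nat; have := level_le s.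
case: (label_conbhd yM) => [[dis_y ->] | [tr_y ->] | [Cy ->]].
- by rewrite (mem_trace_level yM dis_y sS); have := reach_le y; lia.
- by rewrite tr_y sS; lia.
- by rewrite (mem_chain_level _ Cy); have := height_lt Cy; lia.
Qed.

Lemma adj_label x y : e x y = andrasfai_nat k (label x) (label y).
Proof.
have [xS | xM] := boolP (x \in nbhd); have [yS | yM] := boolP (y \in nbhd).
- rewrite (negbTE (nbhd_indep xS yS)) !label_nbhd // /andrasfai_nat.
  by have := level_le x; have := level_le y; lia.
- by apply: adj_nbhd_label; rewrite // conbhdE.
- by rewrite e_sym andrasfai_natC; apply: adj_nbhd_label; rewrite // conbhdE.
- by apply: adj_conbhd_label; rewrite conbhdE.
Qed.

Lemma label_lt x : label x < 3 * k - 1.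
Proof.
have [xS | xM] := boolP (x \in nbhd).
  by rewrite label_nbhd //; have := level_le x; lia.
rewrite -conbhdE in xM.
case: (label_conbhd xM) => [[_ ->] | [_ ->] | [Cx ->]]; first by have := reach_le x; lia.
  by lia.
by have := height_lt Cx; lia.
Qed.

Lemma level_onto m : m <= #|chain| -> exists2 s, s \in nbhd & level s = m.
Proof.
case: m => [_ | m m_lt]; first exact: level_core.
have [X XC hX] := bounded_inj_onto height_inj height_lt m_lt.
have [s sS /andP[_ /eqP level_s]] := level_succ XC.
by exists s; rewrite // level_s hX.
Qed.

Lemma label_onto u : u < 3 * k - 1 -> exists x, label x = u.
Proof.
move=> u_lt; have [-> | u_gt0] := posnP u.
  by exists v; rewrite /label e_irr trace_v properxx /core nbhd_meets_trace.
have [u_le | u_gt] := leqP u #|chain|.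
  have [X XC hX] : exists2 X, X \in chain & height X = u.-1.
    by apply: bounded_inj_onto height_inj height_lt _ _; lia.
  have [s sS /andP[sX /eqP level_s]] := level_succ XC.
  have [x [Bx _ eqX]] := chainP XC; subst X.
  have xM : x \in conbhd by case/andP: Bx.
  have [w wM /andP[sw dis_wx]] := trace_escape xM sS sX.
  have dis_w : [disjoint trace w & core] := disjointWr (core_sub_trace Bx) dis_wx.
  exists w; rewrite label_avoid //.
  have : reach w <= level s by rewrite -mem_trace_level.
  have : height (trace x) < reach w by rewrite -disjoint_chain_trace // disjoint_sym.
  by rewrite level_s hX; lia.
have [u_lt2 | u_ge2] := leqP u (2 * #|chain|).+1.
  have [s sS level_s] : exists2 s, s \in nbhd & level s = u - k.
    by apply: level_onto; lia.
  by exists s; rewrite label_nbhd // level_s; lia.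
have [X XC hX] : exists2 X, X \in chain & height X = u - 2 * k.
  by apply: bounded_inj_onto height_inj height_lt _ _; lia.
have [x [Bx proper_x eqX]] := chainP XC; subst X.
by exists x; rewrite label_chain // hX; lia.
Qed.

Lemma blowup_andrasfai_label : is_blowup_of e (@andrasfai_adj k).
Proof.
exists (fun x => Ordinal (label_lt x)); split.
  by move=> u; have [x label_x] := label_onto (ltn_ord u); exists x; apply: val_inj.
by move=> x y; rewrite andrasfai_adjE adj_label.
Qed.

End Core.

Lemma blowup_andrasfai_vertex : exists k, 0 < k /\ is_blowup_of e (@andrasfai_adj k).
Proof.
have vM : v \in conbhd by rewrite inE e_irr.
pose x0 := [arg min_(x < v in conbhd) #|trace x|].
have [x0M x0_min] : x0 \in conbhd /\ forall x, x \in conbhd -> #|trace x0| <= #|trace x|.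
  by rewrite /x0; case: arg_minnP.
by exists #|chain x0|.+1; split; last exact: blowup_andrasfai_label x0M x0_min.
Qed.

End Vertex.

Lemma andrasfai_blowup_of_C6_free :
  1 < #|T| -> exists k, 0 < k /\ is_blowup_of e (@andrasfai_adj k).
Proof.
move=> T_gt1; have [v _] : exists v, v \in T by apply/card_gt0P; apply: ltnW.
apply: (@blowup_andrasfai_vertex v).
have [y] : exists y, y \in [set~ v] by apply/card_gt0P; rewrite cardsC1; lia.
rewrite in_setC1 eq_sym => neq_vy; have [vy | not_vy] := boolP (e v y); first by exists y.
by have [z /andP[vz _]] := e_max neq_vy not_vy; exists z.
Qed.

End C6Free.
End TriangleFree.

Theorem proposition3p5 (T : finType) (e : rel T) :
  simple_graph e -> maximal_triangle_free e -> 2 <= #|T| ->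
  (~ has_induced_C6 e <->
   exists k : nat, 1 <= k /\ is_blowup_of e (@andrasfai_adj k)).
Proof.
move=> [e_sym e_irr] [e_tf e_max] T_ge2; split => [C6_free | [k [_ blowup]]].
  exact: andrasfai_blowup_of_C6_free.
by move/(blowup_induced_C6 blowup); apply: andrasfai_C6_free.
Qed.
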